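(* Let $(\mathfrak g,\Delta)$ be a perm coalgebra and $\omega\in(\mathfrak g\otimes\mathfrak g)^*$ symmetric, and define $x\cdot_\omega y=x_{(1)}\omega(x_{(2)},y)+y_{(1)}\omega(x,y_{(2)})-y_{(2)}\omega(x,y_{(1)})$. Then the following are equivalent: (i) $\omega$ satisfies the classical co-perm Yang–Baxter equation $\omega(x_{(1)},z)\omega(x_{(2)},y)-\omega(x,z_{(1)})\omega(y,z_{(2)})+\omega(y_{(1)},z)\omega(x,y_{(2)})-\omega(x,y_{(1)})\omega(y_{(2)},z)=0$ for all $x,y,z$ (i.e. $(\mathfrak g,\Delta,\omega,\cdot_\omega)$ is a dual quasitriangular perm bialgebra); (ii) $\omega(x\cdot_\omega y,z)=\omega(x,z_{(1)})\omega(y,z_{(2)})$ for all $x,y,z\in\mathfrak g$; (iii) $\omega(x,y\cdot_\omega z)=\omega(x_{(1)},y)\omega(x_{(2)},z)$ for all $x,y,z\in\mathfrak g$.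
   Context: Over a field $K$; Sweedler notation $\Delta(x)=x_{(1)}\otimes x_{(2)}$. A perm coalgebra $(\mathfrak g,\Delta)$: $x_{(1)(1)}\otimes x_{(1)(2)}\otimes x_{(2)}=x_{(1)}\otimes x_{(2)(1)}\otimes x_{(2)(2)}=x_{(1)}\otimes x_{(2)(2)}\otimes x_{(2)(1)}$ for all $x$. $\omega$ symmetric means $\omega(x,y)=\omega(y,x)$. *)

From HB Require Import structures.
From mathcomp Require Import all_boot all_order all_algebra.
Set Implicit Arguments. Unset Strict Implicit. Unset Printing Implicit Defensive.
Import GRing.Theory.
Local Open Scope ring_scope.

(* Encoding of tensors without a tensor-product library:
   an element of V (x) V is represented by a finite list of pairs
   [(a_1,b_1); ...] standing for  sum_i a_i (x) b_i.  Two representatives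
   denote the same tensor iff every bilinear form takes the same value on
   them (universal property / bilinear forms separate V (x) V); likewise for
   V (x) V (x) V with trilinear forms.  A comultiplication is a map
   Delta : V -> seq (V * V); Sweedler sums x_(1) .. x_(2) are sums over
   the list Delta x. *)

Section Tensors.
Variables (K : fieldType) (V : lmodType K).

Definition bilin_form (f : V -> V -> K) : Prop :=
  (forall (a : K) (x y z : V), f (a *: x + y) z = a * f x z + f y z) /\
  (forall (a : K) (x y z : V), f z (a *: x + y) = a * f z x + f z y).

Definition trilin_form (f : V -> V -> V -> K) : Prop :=
  (forall (a : K) (x y u v : V), f (a *: x + y) u v = a * f x u v + f y u v) /\
  (forall (a : K) (x y u v : V), f u (a *: x + y) v = a * f u x v + f u y v) /\
  (forall (a : K) (x y u v : V), f u v (a *: x + y) = a * f u v x + f u v y).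

Definition teq2 (s t : seq (V * V)) : Prop :=
  forall f, bilin_form f ->
    \sum_(p <- s) f p.1 p.2 = \sum_(p <- t) f p.1 p.2.

Definition comult_linear (D : V -> seq (V * V)) : Prop :=
  forall (a : K) (x y : V),
    teq2 (D (a *: x + y)) ([seq (a *: p.1, p.2) | p <- D x] ++ D y).

(* perm coalgebra:
   x_(1)(1) (x) x_(1)(2) (x) x_(2) = x_(1) (x) x_(2)(1) (x) x_(2)(2)
                                   = x_(1) (x) x_(2)(2) (x) x_(2)(1),
   equalities in V (x) V (x) V tested against all trilinear forms. *)
Definition perm_coalgebra (D : V -> seq (V * V)) : Prop :=
  comult_linear D /\
  forall (x : V) (f : V -> V -> V -> K), trilin_form f ->
    (\sum_(p <- D x) \sum_(q <- D p.1) f q.1 q.2 p.2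
       = \sum_(p <- D x) \sum_(q <- D p.2) f p.1 q.1 q.2) /\
    (\sum_(p <- D x) \sum_(q <- D p.2) f p.1 q.1 q.2
       = \sum_(p <- D x) \sum_(q <- D p.2) f p.1 q.2 q.1).

Definition omega_symmetric (w : V -> V -> K) : Prop :=
  forall x y, w x y = w y x.

Definition dot_w (D : V -> seq (V * V)) (w : V -> V -> K) (x y : V) : V :=
  \sum_(p <- D x) w p.2 y *: p.1
  + \sum_(p <- D y) w x p.2 *: p.1
  - \sum_(p <- D y) w x p.1 *: p.2.

Definition co_perm_CYBE (D : V -> seq (V * V)) (w : V -> V -> K) : Prop :=
  forall x y z : V,
    \sum_(p <- D x) w p.1 z * w p.2 y
    - \sum_(p <- D z) w x p.1 * w y p.2
    + \sum_(p <- D y) w p.1 z * w x p.2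
    - \sum_(p <- D y) w x p.1 * w p.2 z = 0.

End Tensors.

(* Expanding [w (x .w y) z] by linearity of [w] in its first argument gives
   exactly the left-hand side of the co-perm Yang-Baxter equation plus
   [w(x, z_(1)) w(y, z_(2))], so (i) and (ii) are equivalent; symmetry of [w]
   turns (ii) into (iii).  Neither step uses the perm coalgebra axioms. *)

From mathcomp Require Import all_boot all_order all_algebra.
From mathcomp Require Import ring.
Import GRing.Theory.
Local Open Scope ring_scope.

Section BilinearForm.
Variables (K : fieldType) (V : lmodType K) (w : V -> V -> K).
Hypothesis w_bilin : bilin_form w.

Lemma bilin0l z : w 0 z = 0.
Proof.
have := w_bilin.1 1 0 0 z; rewrite scaler0 addr0 mul1r => w0z.
by apply: (addrI (w 0 z)); rewrite addr0 -w0z.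
Qed.

Lemma bilinDl x y z : w (x + y) z = w x z + w y z.
Proof. by have := w_bilin.1 1 x y z; rewrite scale1r mul1r. Qed.

Lemma bilinZl a x z : w (a *: x) z = a * w x z.
Proof. by have := w_bilin.1 a x 0 z; rewrite addr0 bilin0l addr0. Qed.

Lemma bilinBl x y z : w (x - y) z = w x z - w y z.
Proof. by rewrite bilinDl -scaleN1r bilinZl mulN1r. Qed.

Lemma bilin_suml (T : Type) (s : seq T) (F : T -> V) z :
  w (\sum_(p <- s) F p) z = \sum_(p <- s) w (F p) z.
Proof. exact: (big_morph (w^~ z) (fun x y => bilinDl x y z) (bilin0l z)). Qed.

End BilinearForm.

Section DotPairing.
Variables (K : fieldType) (V : lmodType K).
Variables (D : V -> seq (V * V)) (w : V -> V -> K).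

Definition co_perm_CYBE_lhs (x y z : V) : K :=
  \sum_(p <- D x) w p.1 z * w p.2 y
  - \sum_(p <- D z) w x p.1 * w y p.2
  + \sum_(p <- D y) w p.1 z * w x p.2
  - \sum_(p <- D y) w x p.1 * w p.2 z.

Lemma co_perm_CYBEE :
  co_perm_CYBE D w <-> forall x y z, co_perm_CYBE_lhs x y z = 0.
Proof. by []. Qed.

Lemma bilin_dot_wl x y z : bilin_form w ->
  w (dot_w D w x y) z =
    co_perm_CYBE_lhs x y z + \sum_(p <- D z) w x p.1 * w y p.2.
Proof.
move=> w_bilin; rewrite /dot_w /co_perm_CYBE_lhs.
rewrite bilinBl // !bilinDl // !bilin_suml //.
under eq_bigr do rewrite bilinZl // mulrC.
under [X in _ + X - _ = _]eq_bigr do rewrite bilinZl // mulrC.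
under [X in _ - X = _]eq_bigr do rewrite bilinZl //.
ring.
Qed.

Lemma co_perm_CYBE_dot_wl : bilin_form w ->
  co_perm_CYBE D w <->
  forall x y z, w (dot_w D w x y) z = \sum_(p <- D z) w x p.1 * w y p.2.
Proof.
move=> w_bilin; rewrite co_perm_CYBEE.
split=> cybe x y z; move: (bilin_dot_wl x y z w_bilin).
  by rewrite cybe add0r.
by rewrite cybe -{1}[\sum_(p <- _) _]add0r => /addIr.
Qed.

Lemma dot_wl_dot_wr : omega_symmetric w ->
  (forall x y z, w (dot_w D w x y) z = \sum_(p <- D z) w x p.1 * w y p.2) <->
  (forall x y z, w x (dot_w D w y z) = \sum_(p <- D x) w p.1 y * w p.2 z).
Proof.
move=> w_sym; have sym_sum u v t :
    \sum_(p <- D t) w u p.1 * w v p.2 = \sum_(p <- D t) w p.1 u * w p.2 v.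
  by apply: eq_bigr => p _; rewrite (w_sym u) (w_sym v).
by split=> dot_w_eq x y z; rewrite w_sym dot_w_eq sym_sum.
Qed.

End DotPairing.

Theorem proposition3p6 (K : fieldType) (V : lmodType K)
    (D : V -> seq (V * V)) (w : V -> V -> K) :
  perm_coalgebra D -> bilin_form w -> omega_symmetric w ->
  (co_perm_CYBE D w <->
     (forall x y z : V,
        w (dot_w D w x y) z = \sum_(p <- D z) w x p.1 * w y p.2)) /\
  (co_perm_CYBE D w <->
     (forall x y z : V,
        w x (dot_w D w y z) = \sum_(p <- D x) w p.1 y * w p.2 z)).
Proof.
move=> _ w_bilin w_sym.
rewrite -dot_wl_dot_wr //.
by split; apply: co_perm_CYBE_dot_wl.
Qed.
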